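(* Let $m$ be a positive integer divisible by $4$. Then the group $BT(2,m)$ is infinite.
   Context: For integers $n,m\ge1$, $BT(n,m)$ denotes the quotient of the free group $\mathbb{F}_n$ on $n$ generators by the normal subgroup generated by all $x^m$, where $x$ runs over the primitive elements of $\mathbb{F}_n$ (elements belonging to some free basis). *)

(* Free groups are not in the library: we model
   F_n by words over the letters x_i^{+-1} modulo free reduction, and
   BT(n,m) by words modulo the congruence generated by free cancellation and
   deletion/insertion of x^m for primitive x. *)
From Stdlib Require Import Relations.
From mathcomp Require Import all_boot.
Set Implicit Arguments. Unset Strict Implicit. Unset Printing Implicit Defensive.

(* a letter (i, false) is the generator x_i, (i, true) is x_i^-1 *)
Definition letter (n : nat) := ('I_n * bool)%type.
Definition word (n : nat) := seq (letter n).

Definition linv n (a : letter n) : letter n := (a.1, ~~ a.2).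
Definition winv n (w : word n) : word n := rev (map (@linv n) w).

Definition wpow n (w : word n) (k : nat) : word n := flatten (nseq k w).

Inductive free_step n : word n -> word n -> Prop :=
| FreeCancel (s t : word n) (a : letter n) :
    free_step (s ++ a :: linv a :: t) (s ++ t).
Definition free_eq n : relation (word n) := clos_refl_sym_trans _ (@free_step n).

Fixpoint subst n (b : 'I_n -> word n) (w : word n) : word n :=
  match w with
  | [::] => [::]
  | a :: t => (if a.2 then winv (b a.1) else b a.1) ++ subst b t
  end.

(* b is a free basis of F_n: the induced endomorphism x_i |-> b i is
   bijective on F_n (injective and surjective modulo free equality) *)
Definition is_free_basis n (b : 'I_n -> word n) : Prop :=
  (forall u v, free_eq (subst b u) (subst b v) -> free_eq u v) /\
  (forall v, exists u, free_eq (subst b u) v).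

Definition primitive n (w : word n) : Prop :=
  exists (b : 'I_n -> word n) (i : 'I_n), is_free_basis b /\ free_eq (b i) w.

Inductive bt_step (n m : nat) : word n -> word n -> Prop :=
| BTFree (s t : word n) (a : letter n) :
    @bt_step n m (s ++ a :: linv a :: t) (s ++ t)
| BTRel (s t w : word n) : primitive w ->
    @bt_step n m (s ++ wpow w m ++ t) (s ++ t).
Definition bt_eq (n m : nat) : relation (word n) := clos_refl_sym_trans _ (@bt_step n m).

(* Send x to the affine map u |-> i u + 1 and y to u |-> j u of the integer
   quaternions.  A primitive element has nonzero image under the mod-2
   abelianisation F_2 -> (Z/2)^2, since a free basis maps onto a basis of
   (Z/2)^2; hence the linear part of its image is one of +-i, +-j, +-k.  An
   affine map whose linear part squares to -1 has order dividing 4, so for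
   4 | m the representation factors through BT(2, m).  But (x^2 y^2)^k is sent
   to the translation by k (1 + i), so x^2 y^2 has infinite order in BT(2, m). *)
From HB Require Import structures.
From mathcomp Require Import all_boot all_algebra ring.

Set Implicit Arguments. Unset Strict Implicit. Unset Printing Implicit Defensive.
Import GRing.Theory.

Section WordEval.
Local Open Scope group_scope.
Variables (M : monoidType) (n m : nat) (f : letter n -> M).

Definition word_eval (w : word n) : M := \prod_(a <- w) f a.

Lemma word_eval_cons a w : word_eval (a :: w) = f a * word_eval w.
Proof. exact: big_cons. Qed.

Lemma word_eval_cat s t : word_eval (s ++ t) = word_eval s * word_eval t.
Proof. exact: big_cat. Qed.

Lemma word_eval_wpow w k : word_eval (wpow w k) = word_eval w ^+ k.
Proof.
elim: k => [|k IHk]; first exact: big_nil.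
by rewrite expgS -IHk -word_eval_cat.
Qed.

Hypothesis f_linv : forall a, f a * f (linv a) = 1.
Hypothesis word_eval_primitive_exp : forall w, primitive w -> word_eval w ^+ m = 1.

Lemma word_eval_bt_eq u v : bt_eq m u v -> word_eval u = word_eval v.
Proof.
elim=> [_ _ [s t a | s t w w_prim] | // | // _ _ _ -> | _ _ _ _ -> _ -> //].
  by rewrite !word_eval_cat !word_eval_cons [f a * _]mulgA f_linv mul1g.
by rewrite !word_eval_cat word_eval_wpow word_eval_primitive_exp ?mul1g.
Qed.

End WordEval.

Lemma F2_natr k : (k%:R = (odd k)%:R :> 'F_2)%R.
Proof. by rewrite -Fp_nat_mod // modn2. Qed.

Section Parity.
Local Open Scope ring_scope.
Variable n : nat.

Definition letter_count (i : 'I_n) (w : word n) : nat := count (fun a => a.1 == i) w.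

Definition parity (w : word n) : 'rV['F_2]_n := \row_i (letter_count i w)%:R.

Lemma parity_cat s t : parity (s ++ t) = parity s + parity t.
Proof. by apply/rowP => i; rewrite !mxE /letter_count count_cat natrD. Qed.

Lemma parity_winv w : parity (winv w) = parity w.
Proof. by apply/rowP => i; rewrite !mxE /letter_count count_rev count_map. Qed.

Lemma parity_letter a : parity [:: a] = 'e_a.1.
Proof. by apply/rowP => i; rewrite !mxE /letter_count /= addn0 eq_sym. Qed.

Lemma parity_cancel a : parity [:: a; linv a] = 0.
Proof.
by apply/rowP => i; rewrite !mxE /letter_count /= addn0 F2_natr addnn odd_double.
Qed.

Lemma parity_free_eq u v : free_eq u v -> parity u = parity v.
Proof.
elim=> [_ _ [s t a] | // | // _ _ _ -> | _ _ _ _ -> _ -> //].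
have -> : s ++ a :: linv a :: t = s ++ [:: a; linv a] ++ t by [].
by rewrite !parity_cat parity_cancel add0r.
Qed.

Lemma parity_subst (b : 'I_n -> word n) u :
  parity (subst b u) = parity u *m \matrix_i parity (b i).
Proof.
elim: u => [|a t IHt] /=.
  have -> : parity [::] = 0 by apply/rowP => i; rewrite !mxE.
  by rewrite mul0mx.
rewrite parity_cat IHt.
have -> : parity (if a.2 then winv (b a.1) else b a.1) = parity (b a.1).
  by case: a.2; rewrite ?parity_winv.
by rewrite -cat1s parity_cat mulmxDl parity_letter -rowE rowK.
Qed.

(* The parities of a free basis span F_2^n, hence form a basis of it. *)
Lemma parity_primitive w : primitive w -> parity w != 0.
Proof.
case=> b [i [[_ b_onto] /parity_free_eq <-]].
set B := \matrix_k parity (b k).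
have B_full : row_full B.
  rewrite -sub1mx; apply/row_subP => k; rewrite row1.
  have [u /parity_free_eq] := b_onto [:: (k, false)].
  by rewrite parity_subst parity_letter => <-; apply: submxMl.
have B_free : row_free B by rewrite row_free_unit -row_full_unit.
rewrite -(rowK (fun k => parity (b k)) i) rowE -(mul0mx _ B).
rewrite (inj_eq (row_free_inj B_free)).
by apply/eqP => /rowP/(_ i); rewrite !mxE !eqxx; apply/eqP; rewrite oner_eq0.
Qed.

End Parity.

Lemma ord2_cases (k : 'I_2) : k = ord0 \/ k = ord_max.
Proof. by case: k => [[|[|//]] ?]; [left | right]; apply: val_inj. Qed.

Lemma parity2_neq0 (w : word 2) :
  (parity w != 0)%R -> odd (letter_count ord0 w) || odd (letter_count ord_max w).
Proof.
apply: contraR => /norP[even0 even1]; apply/eqP/rowP => k; rewrite !mxE F2_natr.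
have [-> | ->] := ord2_cases k; first by rewrite (negbTE even0).
by rewrite (negbTE even1).
Qed.

Section QuaternionPair.
Local Open Scope ring_scope.
Variables (R : pzRingType) (i j : R).
Hypotheses (i_sqr : i * i = -1) (j_sqr : j * j = -1) (ji_anti : j * i = - (i * j)).

Lemma mulr_signCA (x y : R) k : x * ((-1) ^+ k * y) = (-1) ^+ k * (x * y).
Proof. by rewrite mulrA commr_sign -mulrA. Qed.

Lemma sqrr_signM (x : R) k : ((-1) ^+ k * x) ^+ 2 = x ^+ 2.
Proof. by rewrite exprMn_comm ?sqrr_sign ?mul1r //; apply/commr_sym/commr_sign. Qed.

Lemma expr_sqrN1 (x : R) c : x * x = -1 -> x ^+ c = (-1) ^+ c./2 * x ^+ odd c.
Proof.
move=> x_sqr; rewrite -{1}(odd_double_half c) exprD -muln2 mulnC exprM.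
by rewrite expr2 x_sqr; apply: commr_sign.
Qed.

Lemma mulj_iX c : j * i ^+ c = (-1) ^+ c * (i ^+ c * j).
Proof.
elim: c => [|c IHc]; first by rewrite !expr0 !mul1r mulr1.
rewrite [i ^+ c.+1]exprS mulrA ji_anti mulNr -mulrA IHc mulr_signCA.
by rewrite exprS mulN1r mulNr !mulrA.
Qed.

Lemma iXjX_sqr c0 c1 : odd c0 || odd c1 -> (i ^+ c0 * j ^+ c1) ^+ 2 = -1.
Proof.
move=> odd_c; rewrite (expr_sqrN1 c0 i_sqr) (expr_sqrN1 c1 j_sqr).
rewrite mulr_signCA -mulrA mulr_signCA !sqrr_signM.
move: odd_c; case: (odd c0); case: (odd c1) => //= _.
all: rewrite ?expr1 ?mulr1 ?mul1r expr2 //.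
by rewrite mulrA -(mulrA i) ji_anti mulrN mulNr mulrA i_sqr mulN1r mulNr opprK j_sqr.
Qed.

End QuaternionPair.

Definition quat (R : Type) : Type := (R * R * R * R)%type.

Section Quaternions.
Local Open Scope ring_scope.
Variable R : comNzRingType.

HB.instance Definition _ := GRing.Zmodule.copy (quat R) (R * R * R * R)%type.

Definition qmul (x y : quat R) : quat R :=
  let: (x0, x1, x2, x3) := x in let: (y0, y1, y2, y3) := y in
  (x0 * y0 - x1 * y1 - x2 * y2 - x3 * y3,
   x0 * y1 + x1 * y0 + x2 * y3 - x3 * y2,
   x0 * y2 - x1 * y3 + x2 * y0 + x3 * y1,
   x0 * y3 + x1 * y2 - x2 * y1 + x3 * y0).

Definition qone : quat R := (1, 0, 0, 0).

Ltac quat_ring :=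
  repeat (let x := fresh in move=> x; case: x => [[[? ?] ?] ?]);
  rewrite /GRing.mul /= /qmul /qone /=; congr (_, _, _, _); rewrite /=; ring.

Fact qmulA : associative qmul. Proof. quat_ring. Qed.
Fact qmul1q : left_id qone qmul. Proof. quat_ring. Qed.
Fact qmulq1 : right_id qone qmul. Proof. quat_ring. Qed.
Fact qmulDl : left_distributive qmul +%R. Proof. quat_ring. Qed.
Fact qmulDr : right_distributive qmul +%R. Proof. quat_ring. Qed.
Fact qone_neq0 : qone != 0. Proof. by rewrite /qone !xpair_eqE oner_eq0. Qed.

HB.instance Definition _ := GRing.Zmodule_isNzRing.Build (quat R)
  qmulA qmul1q qmulq1 qmulDl qmulDr qone_neq0.

Definition qi : quat R := (0, 1, 0, 0).
Definition qj : quat R := (0, 0, 1, 0).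

Lemma qi_sqr : qi * qi = -1. Proof. quat_ring. Qed.
Lemma qj_sqr : qj * qj = -1. Proof. quat_ring. Qed.
Lemma qji_anti : qj * qi = - (qi * qj). Proof. quat_ring. Qed.

Lemma quat_re_natmul (x : quat R) k : (x *+ k).1.1.1 = x.1.1.1 *+ k.
Proof. by elim: k => [|k IHk]; rewrite ?mulr0n // !mulrS -IHk. Qed.

End Quaternions.

Lemma quat_int_translation_inj : injective (fun k => (1 + qi int) *+ k)%R.
Proof.
by move=> k l /(congr1 (fun x => x.1.1.1)); rewrite !quat_re_natmul /= addr0 !natz => -[].
Qed.

(* [(a, v)] stands for the affine map [u |-> a * u + v]. *)
Definition affine (R : Type) : Type := (R * R)%type.

Section AffineMonoid.
Local Open Scope ring_scope.
Variable R : pzRingType.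

HB.instance Definition _ := Choice.copy (affine R) (R * R)%type.

Definition affine_mul (x y : affine R) : affine R := (x.1 * y.1, x.2 + x.1 * y.2).
Definition affine_one : affine R := (1, 0).

Fact affine_mulA : associative affine_mul.
Proof. by move=> x y z; rewrite /affine_mul /= mulrA mulrDr mulrA addrA. Qed.

Fact affine_mul1 : left_id affine_one affine_mul.
Proof. by case=> a v; rewrite /affine_mul /= !mul1r add0r. Qed.

Fact affine_mulr1 : right_id affine_one affine_mul.
Proof. by case=> a v; rewrite /affine_mul /= mulr1 mulr0 addr0. Qed.

HB.instance Definition _ :=
  isMonoid.Build (affine R) affine_mulA affine_mul1 affine_mulr1.

Lemma affine_mulE (x y : affine R) : (x * y)%g = (x.1 * y.1, x.2 + x.1 * y.2).
Proof. by []. Qed.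

Lemma affine_exp4 (x : affine R) : x.1 * x.1 = -1 -> (x ^+ 4 = 1)%g.
Proof.
move=> x1_sqr; rewrite (@expgnA _ x 2 2) !expg2 !affine_mulE x1_sqr /=.
by rewrite !mulN1r opprK subrr.
Qed.

Lemma affine_translation_exp (v : R) k :
  (((1%R, v) : affine R) ^+ k)%g = (1, v *+ k).
Proof.
elim: k => [|k IHk]; first by [].
by rewrite expgS IHk affine_mulE /= !mul1r mulrS.
Qed.

End AffineMonoid.

Lemma injective_nat_notin_seq (T : eqType) (f : nat -> T) (s : seq T) :
  injective f -> ~ (forall k, f k \in s).
Proof.
move=> f_inj f_in; have : size (map f (iota 0 (size s).+1)) <= size s.
  apply: uniq_leq_size; first by rewrite (map_inj_uniq f_inj) iota_uniq.
  by move=> _ /mapP[k _ ->].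
by rewrite size_map size_iota ltnn.
Qed.

Section AffineRepresentation.
Local Open Scope ring_scope.
Variables (R : pzRingType) (i j : R).
Hypotheses (i_sqr : i * i = -1) (j_sqr : j * j = -1) (ji_anti : j * i = - (i * j)).

Definition affine_letter (a : letter 2) : affine R :=
  let: (k, inv) := a in
  if k == ord0 then if inv then (- i, i) else (i, 1)
  else if inv then (- j, 0) else (j, 0).

Lemma affine_letter_linv a : (affine_letter a * affine_letter (linv a) = 1)%g.
Proof.
case: a => k [] /=; case: (k == ord0); rewrite affine_mulE /=;
by rewrite ?mulNr ?mulrN ?i_sqr ?j_sqr ?opprK ?mulr1 ?mulr0 ?addr0 ?subrr.
Qed.

Definition affine_rep : word 2 -> affine R := word_eval affine_letter.

Lemma affine_rep_linear_part w : exists s : nat,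
  (affine_rep w).1 = (-1) ^+ s * (i ^+ letter_count ord0 w * j ^+ letter_count ord_max w).
Proof.
elim: w => [|[k inv] t [s IHt]].
  by exists 0%N; rewrite /affine_rep /word_eval big_nil /= !mul1r.
rewrite /affine_rep word_eval_cons -/(affine_rep t) affine_mulE /= IHt.
set c0 := letter_count ord0 t; set c1 := letter_count ord_max t.
have [-> | ->] := ord2_cases k; case: inv; rewrite /= ?add0n ?add1n.
- by exists s.+1; rewrite mulNr mulr_signCA !exprS mulN1r mulNr !mulrA.
- by exists s; rewrite mulr_signCA exprS !mulrA.
- exists (s + c0).+1; rewrite mulNr mulr_signCA mulrA (mulj_iX ji_anti).
  by rewrite !exprS exprD mulN1r !mulNr !mulrA.
- exists (s + c0); rewrite mulr_signCA mulrA (mulj_iX ji_anti).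
  by rewrite exprS exprD !mulrA.
Qed.

Lemma affine_rep_primitive_exp4 w : primitive w -> (affine_rep w ^+ 4 = 1)%g.
Proof.
move=> w_prim; apply: affine_exp4; have [s ->] := affine_rep_linear_part w.
rewrite -expr2 sqrr_signM (iXjX_sqr i_sqr j_sqr ji_anti) //.
exact/parity2_neq0/parity_primitive.
Qed.

Lemma affine_rep_bt_eq m u v :
  (4 %| m)%N -> bt_eq m u v -> affine_rep u = affine_rep v.
Proof.
move=> /dvdnP[q ->]; apply: word_eval_bt_eq => [a | w w_prim].
  exact: affine_letter_linv.
by rewrite mulnC expgnA affine_rep_primitive_exp4 // expg1n.
Qed.

Definition x2y2 : word 2 :=
  [:: (ord0, false); (ord0, false); (ord_max, false); (ord_max, false)].

Lemma affine_rep_x2y2_wpow k : affine_rep (wpow x2y2 k) = (1, (1 + i) *+ k).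
Proof.
rewrite /affine_rep word_eval_wpow -(affine_translation_exp (1 + i)); congr (_ ^+ _)%g.
rewrite !word_eval_cons /word_eval big_nil mulg1 !affine_mulE /=.
by rewrite j_sqr mulrN1 mulrN i_sqr opprK mulr0 add0r mulr0 addr0 mulr1.
Qed.

Lemma BT2_infinite m : (4 %| m)%N -> injective (fun k => (1 + i) *+ k) ->
  ~ (exists L : seq (word 2), forall w : word 2, exists2 u, u \in L & bt_eq m w u).
Proof.
move=> m4 translation_inj [L repr_L].
apply: (@injective_nat_notin_seq _ _ [seq (affine_rep u).2 | u <- L]
  translation_inj) => k.
have [u u_L /(affine_rep_bt_eq m4)] := repr_L (wpow x2y2 k).
by rewrite affine_rep_x2y2_wpow => /(congr1 snd) /= ->; apply: map_f.
Qed.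

End AffineRepresentation.

Theorem proposition6p1 (m : nat) :
  0 < m -> 4 %| m ->
  ~ (exists L : seq (word 2), forall w : word 2, exists2 u, u \in L & bt_eq m w u).
Proof.
move=> _ m4; apply: (BT2_infinite (@qi_sqr int) (@qj_sqr int) (@qji_anti int) m4).
exact: quat_int_translation_inj.
Qed.
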